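(* Let $\mathcal{X},\mathcal{Y}_1,\mathcal{Y}_2$ be finite sets and consider the binary hypothesis testing system described in the context, with null pmf $P_{XY_1Y_2}$ and alternative pmf $\bar P_{XY_1Y_2}$, where $\bar P_{XY_1Y_2}(x,y_1,y_2)>0$ for all $(x,y_1,y_2)$. If $R_1\ge H(X)$ and $R_2\ge H(Y_1|X)$ (entropies computed under $P_{XY_1Y_2}$), then for every $\epsilon_1,\epsilon_2\in(0,1)$ the region $\mathcal{E}(R_1,R_2,\epsilon_1,\epsilon_2)$ equals the set of all nonnegative pairs $(\theta_1,\theta_2)$ with \[\theta_1\le D(P_{XY_1}\|\bar P_{XY_1}),\qquad \theta_2\le D(P_{XY_1Y_2}\|\bar P_{XY_1Y_2}).\]
   Context: Setting: Under hypothesis $\mathcal{H}=1$ (null) the triples $(X_t,Y_{1,t},Y_{2,t})$, $t=1,\dots,n$, are i.i.d. $\sim P_{XY_1Y_2}$; under $\mathcal{H}=2$ (alternative) i.i.d. $\sim \bar P_{XY_1Y_2}$. $P_{XY_1}$, $\bar P_{XY_1}$ denote marginals. A code of blocklength $n$: encoder $\phi_{1,n}:\mathcal{X}^n\to\{1,\dots,\|\phi_{1,n}\|\}$, $M_1=\phi_{1,n}(X^n)$ sent to both detectors; Detector 1 (observing $Y_1^n$) computes $M_2=\phi_{2,n}(M_1,Y_1^n)\in\{1,\dots,\|\phi_{2,n}\|\}$, sent to Detector 2, and decides $\hat{\mathcal H}_1=\psi_{1,n}(M_1,Y_1^n)\in\{1,2\}$; Detector 2 (observing $Y_2^n$) decides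 $\hat{\mathcal H}_2=\psi_{2,n}(M_1,M_2,Y_2^n)\in\{1,2\}$. Let $\alpha_{k,n}=\Pr[\hat{\mathcal H}_k\neq 1\mid\mathcal H=1]$, $\beta_{k,n}=\Pr[\hat{\mathcal H}_k\neq 2\mid\mathcal H=2]$. $(\theta_1,\theta_2)$ is achievable for $(R_1,R_2,\epsilon_1,\epsilon_2)$ if there are codes for all $n$ with $\limsup_n\alpha_{k,n}\le\epsilon_k$, $\theta_k\le\liminf_n-\frac1n\log\beta_{k,n}$, $\limsup_n\frac1n\log\|\phi_{k,n}\|\le R_k$, $k=1,2$. $\mathcal{E}(R_1,R_2,\epsilon_1,\epsilon_2)$ is the closure of the set of achievable pairs. *)

From HB Require Import structures.
From mathcomp Require Import all_boot all_order all_algebra.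
From mathcomp Require Import all_classical all_reals all_analysis.
Set Implicit Arguments. Unset Strict Implicit. Unset Printing Implicit Defensive.
Import Order.TTheory GRing.Theory Num.Theory.
Import numFieldNormedType.Exports.
Local Open Scope classical_set_scope.
Local Open Scope ring_scope.

Section HT.
Variables (R : realType) (X Y1 Y2 : finType).

Definition triple := (X * Y1 * Y2)%type.

Definition is_pmf (T : finType) (Q : T -> R) :=
  (forall t, 0 <= Q t) /\ \sum_(t : T) Q t = 1.

Definition marg_X (Q : triple -> R) (x : X) : R :=
  \sum_(y1 : Y1) \sum_(y2 : Y2) Q (x, y1, y2).
Definition marg_XY1 (Q : triple -> R) (xy : X * Y1) : R :=
  \sum_(y2 : Y2) Q (xy.1, xy.2, y2).

(* natural logarithm throughout; 0 ln 0 = 0 since ln 0 = 0 in mathcomp *)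
Definition entropy_X (Q : triple -> R) : R :=
  - \sum_(x : X) marg_X Q x * ln (marg_X Q x).
Definition cond_entropy_Y1_X (Q : triple -> R) : R :=
  - \sum_(xy : X * Y1) marg_XY1 Q xy * ln (marg_XY1 Q xy / marg_X Q xy.1).
Definition kl (T : finType) (Q Qb : T -> R) : R :=
  \sum_(t : T) Q t * ln (Q t / Qb t).

(* a code of blocklength n; messages of phi_k take values in 'I_(M_k),
   i.e. ||phi_k|| = M_k.  Decisions: [true] means "H-hat = 2", [false]
   means "H-hat = 1". *)
Record code (n : nat) := Code {
  M1 : nat; M2 : nat;
  phi1 : n.-tuple X -> 'I_M1;
  phi2 : 'I_M1 -> n.-tuple Y1 -> 'I_M2;
  psi1 : 'I_M1 -> n.-tuple Y1 -> bool;
  psi2 : 'I_M1 -> 'I_M2 -> n.-tuple Y2 -> bool }.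

Definition prob_iid (Q : triple -> R) (n : nat) (E : pred (n.-tuple triple)) : R :=
  \sum_(t : n.-tuple triple | E t) \prod_(i < n) Q (tnth t i).

Definition xs n (t : n.-tuple triple) : n.-tuple X := map_tuple (fun z => z.1.1) t.
Definition y1s n (t : n.-tuple triple) : n.-tuple Y1 := map_tuple (fun z => z.1.2) t.
Definition y2s n (t : n.-tuple triple) : n.-tuple Y2 := map_tuple (fun z => z.2) t.

Definition dec1 n (c : code n) (t : n.-tuple triple) : bool :=
  psi1 (phi1 c (xs t)) (y1s t).
Definition dec2 n (c : code n) (t : n.-tuple triple) : bool :=
  let m1 := phi1 c (xs t) in
  psi2 m1 (phi2 m1 (y1s t)) (y2s t).

Definition alpha (P : triple -> R) n (c : code n) (k : bool) : R :=
  prob_iid P (fun t => if k then dec2 c t else dec1 c t).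
Definition beta (Pb : triple -> R) n (c : code n) (k : bool) : R :=
  prob_iid Pb (fun t => ~~ (if k then dec2 c t else dec1 c t)).

Definition exponent (b : R) (n : nat) : \bar R :=
  if b == 0 then +oo%E else (- ln b / n%:R)%:E.

Definition achievable (P Pb : triple -> R) (R1 R2 e1 e2 : R) (th : R * R) :=
  exists c : forall n, code n,
    [/\ (limn_esup (fun n => (alpha P (c n) false)%:E) <= e1%:E)%E,
        (limn_esup (fun n => (alpha P (c n) true)%:E) <= e2%:E)%E,
        (th.1%:E <= limn_einf (fun n => exponent (beta Pb (c n) false) n))%E,
        (th.2%:E <= limn_einf (fun n => exponent (beta Pb (c n) true) n))%E &
      (limn_esup (fun n => (ln (M1 (c n))%:R / n%:R)%:E) <= R1%:E)%E /\
      (limn_esup (fun n => (ln (M2 (c n))%:R / n%:R)%:E) <= R2%:E)%E].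

Definition region (P Pb : triple -> R) (R1 R2 e1 e2 : R) : set (R * R) :=
  closure (achievable P Pb R1 R2 e1 e2).

End HT.

(* Converse: a test whose type-I error stays below e < 1 accepts H = 1 on a
   set of P-probability at least 1 - e - o(1).  By the weak law of large
   numbers most of that set consists of blocks whose log-likelihood ratio is
   at most n (D + d), and a change of measure shows that the alternative
   gives such blocks probability at least exp (- n (D + d)); hence the type-II
   exponent is at most D.  Detector 1 sees only (X, Y1), so this applies to it
   with the (X, Y1)-marginals, and to detector 2 with the full triple law.
   The resulting bounds describe a closed set, which thus contains the region.

   Achievability: the encoder sends the index of x^n among the entropy-typical
   sequences (at most exp (n (H(X) + d)) of them), detector 1 forwards the
   index of y1^n among the sequences conditionally typical given x^n (at most
   exp (n (H(Y1|X) + d))), and each detector thresholds at n (D - d) the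
   log-likelihood ratio of the blocks it then knows.  With d = n^(-1/4),
   Chebyshev's inequality makes all typicality failures vanish, while a
   change of measure bounds the type-II errors by exp (- n (D - d)). *)

From Pilot Require Import Defs.
From HB Require Import structures.
From mathcomp Require Import all_boot all_order all_algebra.
From mathcomp Require Import all_classical all_reals all_analysis.
From mathcomp Require Import lra.
Import Order.TTheory GRing.Theory Num.Theory.
Import numFieldNormedType.Exports.
Set Implicit Arguments. Unset Strict Implicit. Unset Printing Implicit Defensive.
Local Open Scope classical_set_scope.
Local Open Scope ring_scope.

Section limf_esup_einf_near.
Context {T : choiceType} {X : filteredType T} {R : realType}.
Context (F : set_system X) {FF : Filter F}.
Implicit Types (f : X -> \bar R) (l : R).
Local Open Scope ereal_scope.

Lemma limf_esup_le_nearP f l :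
  limf_esup f F <= l%:E <->
  (forall e : R, (0 < e)%R -> \forall x \near F, f x <= (l + e)%:E).
Proof.
split=> [fl e e0|fl].
  have : limf_esup f F < (l + e)%:E by rewrite (le_lt_trans fl) // lte_fin ltrDl.
  rewrite limf_esupE => /ereal_inf_lt[_ [V FV <-]] Vl.
  apply: filterS FV => x Vx; rewrite (le_trans _ (ltW Vl)) //.
  by apply: ereal_sup_ubound; exists x.
apply/lee_addgt0Pr => e e0; rewrite limf_esupE.
apply: (le_trans (ereal_inf_lbound _)).
  by exists [set x | f x <= (l + e)%:E]; [exact: fl|].
by apply: ge_ereal_sup => _ [x fx <-].
Qed.

Lemma limf_einf_ge_nearP f l :
  l%:E <= limf_einf f F <->
  (forall e : R, (0 < e)%R -> \forall x \near F, (l - e)%:E <= f x).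
Proof.
split=> [fl e e0|fl].
  have : (l - e)%:E < limf_einf f F by rewrite (lt_le_trans _ fl) // lte_fin gtrBl.
  rewrite limf_einfE => /ereal_sup_gt[_ [V FV <-]] Vl.
  apply: filterS FV => x Vx; rewrite (le_trans (ltW Vl)) //.
  by apply: ereal_inf_lbound; exists x.
apply/lee_subgt0Pr => e e0; rewrite limf_einfE.
apply: le_trans (ereal_sup_ubound _); last first.
  by exists [set x | (l - e)%:E <= f x]; [exact: fl|].
by apply: le_ereal_inf_tmp => _ [x fx <-].
Qed.

Lemma limf_esup_le_near f l :
  (\forall x \near F, f x <= l%:E) -> limf_esup f F <= l%:E.
Proof.
move=> fl; apply/limf_esup_le_nearP => e e0; apply: filterS fl => x /le_trans; apply.
by rewrite lee_fin lerDl ltW.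
Qed.

End limf_esup_einf_near.

Section iid.
Variables (R : realType) (T : finType) (n : nat).
Implicit Types (Q : T -> R) (E : pred (n.-tuple T)).

Definition iid Q (t : n.-tuple T) : R := \prod_(i < n) Q (tnth t i).

Definition iid_pr Q E : R := \sum_(t | E t) iid Q t.

Lemma sum_prod_tnth (F : 'I_n -> T -> R) :
  \sum_(t : n.-tuple T) \prod_(i < n) F i (tnth t i) = \prod_(i < n) \sum_x F i x.
Proof.
rewrite bigA_distr_bigA (reindex (fun f : {ffun 'I_n -> T} => [tuple f i | i < n])) /=.
  by apply: eq_bigr => f _; apply: eq_bigr => i _; rewrite tnth_mktuple.
exists (fun t => [ffun i => tnth t i]) => [f _|t _].
  by apply/ffunP => i; rewrite ffunE tnth_mktuple.
by apply: eq_from_tnth => i; rewrite tnth_mktuple ffunE.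
Qed.

Lemma iid_ge0 Q t : (forall x, 0 <= Q x) -> 0 <= iid Q t.
Proof. by move=> Q0; apply: prodr_ge0. Qed.

Lemma iid_eq0 Q t i : Q (tnth t i) = 0 -> iid Q t = 0.
Proof. by move=> Qi0; rewrite /iid (bigD1 i) //= Qi0 mul0r. Qed.

Lemma sum_iid Q : is_pmf Q -> \sum_t iid Q t = 1.
Proof. by move=> [_ Q1]; rewrite /iid (sum_prod_tnth (fun=> Q)) big1. Qed.

Lemma iid_pr_ge0 Q E : (forall x, 0 <= Q x) -> 0 <= iid_pr Q E.
Proof. by move=> Q0; apply: sumr_ge0 => t _; exact: iid_ge0. Qed.

Lemma le_iid_pr Q E E' : (forall x, 0 <= Q x) -> subpred E E' ->
  iid_pr Q E <= iid_pr Q E'.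
Proof.
move=> Q0 EE'; rewrite /iid_pr [leRHS]big_mkcond [leLHS]big_mkcond /=.
apply: ler_sum => t _; case: ifP => [/EE' -> //|_].
by case: ifP => _; rewrite ?iid_ge0.
Qed.

Lemma iid_pr_subadditive Q E E1 E2 : (forall x, 0 <= Q x) ->
  subpred E (predU E1 E2) -> iid_pr Q E <= iid_pr Q E1 + iid_pr Q E2.
Proof.
move=> Q0 EE12; rewrite /iid_pr [leLHS]big_mkcond [X in _ <= X + _]big_mkcond.
rewrite [X in _ <= _ + X]big_mkcond -big_split /=.
apply: ler_sum => t _; have := iid_ge0 t Q0; have := EE12 t; rewrite !inE /=.
by case: (E t); case: (E1 t); case: (E2 t) => //= ? ?; lra.
Qed.

Lemma iid_prC Q E : is_pmf Q -> iid_pr Q (fun t => ~~ E t) = 1 - iid_pr Q E.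
Proof. by move=> Qpmf; rewrite -(sum_iid Qpmf) (bigID E) /= /iid_pr addrAC subrr add0r. Qed.

Lemma iid_pr_eq0 Q E : (forall t, E t -> exists i, Q (tnth t i) = 0) ->
  iid_pr Q E = 0.
Proof. by move=> EQ0; apply: big1 => t /EQ0 [i] /iid_eq0. Qed.

Definition has_null Q (t : n.-tuple T) : bool := [exists i, Q (tnth t i) == 0].

Lemma iid_pr_has_null Q : iid_pr Q (has_null Q) = 0.
Proof. by apply: iid_pr_eq0 => t /existsP[i /eqP]; exists i. Qed.

Lemma has_nullPn Q t : (forall x, 0 <= Q x) -> ~~ has_null Q t ->
  forall i, 0 < Q (tnth t i).
Proof. by move=> Q0 /existsPn Qt_neq0 i; rewrite lt_def Qt_neq0 Q0. Qed.

End iid.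

Section moments.
Variables (R : realType) (T : finType).
Implicit Types (Q f g : T -> R).

Definition mean Q f : R := \sum_x Q x * f x.

Definition variance Q f : R := \sum_x Q x * (f x - mean Q f) ^+ 2.

Lemma prod_if_eq n (i : 'I_n) (c : 'I_n -> R) :
  \prod_(k < n) (if k == i then c k else 1) = c i.
Proof. by rewrite -big_mkcond big_pred1_eq. Qed.

Lemma iid_cross_moment Q g n (i j : 'I_n) : is_pmf Q -> mean Q g = 0 ->
  \sum_(t : n.-tuple T) iid Q t * (g (tnth t i) * g (tnth t j)) =
  if i == j then mean Q (fun x => g x ^+ 2) else 0.
Proof.
move=> [_ Q1] g0.
pose F k x := Q x * (if k == i then g x else 1) * (if k == j then g x else 1).
transitivity (\sum_(t : n.-tuple T) \prod_(k < n) F k (tnth t k)).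
  by apply: eq_bigr => t _; rewrite !big_split /= !prod_if_eq mulrA.
rewrite sum_prod_tnth (bigD1 i) //= /F eqxx.
have [<-|ij] := eqVneq i j.
  rewrite [X in _ * X]big1 => [|k ki]; last first.
    by rewrite (negbTE ki); under eq_bigr do rewrite !mulr1.
  by rewrite mulr1; under eq_bigr do rewrite -mulrA -expr2.
rewrite (eq_bigr (fun x => Q x * g x)) => [|x _]; last by rewrite mulr1.
by rewrite -/(mean Q g) g0 mul0r.
Qed.

Lemma iid_sum_sqr Q g n : is_pmf Q -> mean Q g = 0 ->
  \sum_(t : n.-tuple T) iid Q t * (\sum_(i < n) g (tnth t i)) ^+ 2 =
  n%:R * mean Q (fun x => g x ^+ 2).
Proof.
move=> Qpmf g0.
under eq_bigr do rewrite expr2 big_distrlr mulr_sumr.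
under eq_bigr do under eq_bigr do rewrite mulr_sumr.
rewrite exchange_big; under eq_bigr do rewrite exchange_big.
under eq_bigr do under eq_bigr do rewrite iid_cross_moment //.
rewrite mulr_natl -[X in _ *+ X]card_ord -sumr_const; apply: eq_bigr => i _.
by rewrite (bigD1 i) //= eqxx big1 ?addr0 // => j; rewrite eq_sym => /negbTE ->.
Qed.

Definition atypical Q f (a : R) n (t : n.-tuple T) : bool :=
  a <= `|\sum_(i < n) f (tnth t i) - n%:R * mean Q f|.

Lemma iid_chebyshev Q f n (a : R) : is_pmf Q -> 0 < a ->
  iid_pr Q (@atypical Q f a n) <= n%:R * variance Q f / a ^+ 2.
Proof.
move=> Qpmf a0; have [Q0 Q1] := Qpmf.
pose g x := f x - mean Q f.
have sum_g (t : n.-tuple T) :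
    \sum_(i < n) f (tnth t i) - n%:R * mean Q f = \sum_(i < n) g (tnth t i).
  by rewrite sumrB sumr_const card_ord mulr_natl.
have g0 : mean Q g = 0.
  rewrite /mean /g; under eq_bigr do rewrite mulrBr.
  by rewrite sumrB -mulr_suml Q1 mul1r subrr.
rewrite /variance -/(mean Q (fun x => g x ^+ 2)) -(iid_sum_sqr n Qpmf g0) mulr_suml.
rewrite /iid_pr big_mkcond /=; apply: ler_sum => t _; rewrite /atypical sum_g.
have iid0 := iid_ge0 t Q0; case: ifP => [ha|_]; last first.
  by apply: divr_ge0; [exact: mulr_ge0 iid0 (sqr_ge0 _)|exact: sqr_ge0].
rewrite -mulrA ler_peMr // ler_pdivlMr ?exprn_gt0 // mul1r.
by rewrite -[leRHS]real_normK ?num_real // lerXn2r // nnegrE ltW.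
Qed.

Lemma atypical_sum_gt Q f (d : R) n (t : n.-tuple T) :
  n%:R * (mean Q f + d) < \sum_(i < n) f (tnth t i) -> atypical Q f (n%:R * d) t.
Proof.
by move=> lt_sum; rewrite /atypical (le_trans _ (ler_norm _)) //; lra.
Qed.

Lemma atypical_sum_lt Q f (d : R) n (t : n.-tuple T) :
  \sum_(i < n) f (tnth t i) < n%:R * (mean Q f - d) -> atypical Q f (n%:R * d) t.
Proof.
by move=> lt_sum; rewrite /atypical -normrN (le_trans _ (ler_norm _)) //; lra.
Qed.

Lemma iid_wlln Q f (d : nat -> R) : is_pmf Q ->
  (\forall n \near \oo, 0 < d n) ->
  (forall C, \forall n \near \oo, C <= n%:R * d n ^+ 2) ->
  forall e, 0 < e -> \forall n \near \oo, iid_pr Q (@atypical Q f (n%:R * d n) n) <= e.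
Proof.
move=> Qpmf d0 dC e e0; near=> n.
have n0 : 0 < n%:R :> R by rewrite ltr0n; near: n; exact: nbhs_infty_gt.
have dn0 : 0 < d n by near: n; exact: d0.
have : variance Q f / e <= n%:R * d n ^+ 2 by near: n; exact: dC.
rewrite ler_pdivrMr // => Vn.
apply: le_trans (iid_chebyshev f n Qpmf (mulr_gt0 n0 dn0)) _.
rewrite ler_pdivrMr ?exprn_gt0 ?mulr_gt0 // exprMn.
have := ler_wpM2l (ltW n0) Vn; lra.
Unshelve. all: by end_near. Qed.

End moments.

Section deviation.
Variable R : realType.

(* [dev n = n^(-1/4)] tends to 0 while [n * dev n ^+ 2] tends to +oo, as the
   weak law of large numbers requires. *)
Definition dev (n : nat) : R := (Num.sqrt (Num.sqrt n%:R))^-1.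

Lemma dev_ge0 n : 0 <= dev n.
Proof. by rewrite invr_ge0 sqrtr_ge0. Qed.

Lemma near_dev_gt0 : \forall n \near \oo, 0 < dev n.
Proof.
by near=> n; rewrite invr_gt0 !sqrtr_gt0 ltr0n; near: n; exact: nbhs_infty_gt.
Unshelve. all: by end_near. Qed.

Lemma mul_dev_sqr n : n%:R * dev n ^+ 2 = Num.sqrt n%:R.
Proof.
have [->|n0] := posnP n; first by rewrite mul0r sqrtr0.
have s0 : 0 < Num.sqrt (n%:R : R) by rewrite sqrtr_gt0 ltr0n.
rewrite exprVn sqr_sqrtr ?sqrtr_ge0 // -{1}(@sqr_sqrtr _ n%:R) ?ler0n //.
by rewrite expr2 mulfK ?gt_eqF.
Qed.

Lemma near_mul_dev_sqr_ge (C : R) : \forall n \near \oo, C <= n%:R * dev n ^+ 2.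
Proof.
near=> n; rewrite mul_dev_sqr (le_trans (ler_norm C)) // -sqrtr_sqr ler_sqrt //.
by near: n; exact: nbhs_infty_ger.
Unshelve. all: by end_near. Qed.

Lemma near_dev_le (e : R) : 0 < e -> \forall n \near \oo, dev n <= e.
Proof.
move=> e0; near=> n.
have ei0 : 0 <= e^-1 by rewrite invr_ge0 ltW.
have n0 : 0 < n%:R :> R by rewrite ltr0n; near: n; exact: nbhs_infty_gt.
have key : e^-1 <= Num.sqrt (Num.sqrt n%:R).
  rewrite -(ger0_norm ei0) -sqrtr_sqr ler_sqrt ?sqrtr_ge0 //.
  rewrite -(ger0_norm (exprn_ge0 2 ei0)) -sqrtr_sqr ler_sqrt ?ler0n // -exprM.
  by near: n; exact: nbhs_infty_ger.
by rewrite /dev -[e]invrK lef_pV2 ?posrE ?invr_gt0 ?sqrtr_gt0.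
Unshelve. all: by end_near. Qed.

End deviation.

Section iid_atypical.
Variables (R : realType) (T : finType) (Q f : T -> R).
Hypothesis Qpmf : is_pmf Q.

Lemma near_iid_pr_atypical_cst (d e : R) : 0 < d -> 0 < e ->
  \forall n \near \oo, iid_pr Q (@atypical _ _ Q f (n%:R * d) n) <= e.
Proof.
move=> d0 e0; apply: iid_wlln Qpmf _ _ _ e0 => [|C]; first exact: nearW.
near=> n; rewrite -ler_pdivrMr ?exprn_gt0 //.
by near: n; exact: nbhs_infty_ger.
Unshelve. all: by end_near. Qed.

Lemma near_iid_pr_atypical_dev (e : R) : 0 < e ->
  \forall n \near \oo, iid_pr Q (@atypical _ _ Q f (n%:R * dev R n) n) <= e.
Proof.
move=> e0; apply: iid_wlln Qpmf _ _ _ e0; [exact: near_dev_gt0|exact: near_mul_dev_sqr_ge].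
Qed.

End iid_atypical.

Definition llr (R : realType) (T : finType) (Q Qb : T -> R) (x : T) : R :=
  ln (Q x / Qb x).

Section exponent.
Variable R : realType.

Lemma lee_exponent (b x : R) n : (0 < n)%N -> 0 < b ->
  (x%:E <= exponent b n)%E = (ln b <= - (n%:R * x)).
Proof.
move=> n0 b0; rewrite /exponent gt_eqF // lee_fin ler_pdivlMr ?ltr0n //.
by rewrite mulrC lerNr.
Qed.

Lemma exponent_ge (b x : R) n : (0 < n)%N -> 0 <= b ->
  b <= expR (- (n%:R * x)) -> (x%:E <= exponent b n)%E.
Proof.
move=> n0; rewrite le_eqVlt => /predU1P[<- _|b0 bx]; first by rewrite /exponent eqxx leey.
by rewrite lee_exponent // -[leRHS]expRK ler_ln ?posrE ?expR_gt0.
Qed.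

End exponent.

Section change_of_measure.
Variables (R : realType) (T : finType) (Q Qb : T -> R).
Hypotheses (Q0 : forall x, 0 <= Q x) (Qb_gt0 : forall x, 0 < Qb x).

Let Qb0 x : 0 <= Qb x := ltW (Qb_gt0 x).

Lemma iid_llr n (t : n.-tuple T) : (forall i, 0 < Q (tnth t i)) ->
  iid Q t = iid Qb t * expR (\sum_(i < n) llr Q Qb (tnth t i)).
Proof.
move=> Qt_gt0; rewrite expR_sum /iid -big_split /=; apply: eq_bigr => i _.
by rewrite /llr lnK ?posrE ?divr_gt0 // mulrC divfK ?gt_eqF.
Qed.

Lemma iid_le_llr n (t : n.-tuple T) :
  iid Q t <= iid Qb t * expR (\sum_(i < n) llr Q Qb (tnth t i)).
Proof.
have [Qt_gt0|] := boolP [forall i, 0 < Q (tnth t i)].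
  by rewrite (iid_llr (forallP Qt_gt0)).
rewrite negb_forall => /existsP[i]; rewrite -leNgt => Qi_le0.
rewrite (@iid_eq0 _ _ _ _ _ i); last by apply/le_anti; rewrite Qi_le0 Q0.
by rewrite mulr_ge0 ?expR_ge0 ?iid_ge0.
Qed.

Lemma iid_pr_llr_le n (E : pred (n.-tuple T)) (c : R) :
  (forall t, E t -> \sum_(i < n) llr Q Qb (tnth t i) <= c) ->
  iid_pr Q E * expR (- c) <= iid_pr Qb E.
Proof.
move=> Ec; rewrite /iid_pr mulr_suml; apply: ler_sum => t /Ec llr_le.
rewrite expRN ler_pdivrMr ?expR_gt0 // (le_trans (iid_le_llr t)) //.
by rewrite ler_wpM2l ?iid_ge0 ?ler_expR.
Qed.

Lemma iid_pr_llr_typical_le n (E : pred (n.-tuple T)) (d : R) :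
  iid_pr Q (fun t => E t && ~~ atypical Q (llr Q Qb) (n%:R * d) t) *
    expR (- (n%:R * (kl Q Qb + d))) <= iid_pr Qb E.
Proof.
apply: le_trans (iid_pr_llr_le _) _ => [t /andP[_]|].
  rewrite /atypical -ltNge => /(le_lt_trans (ler_norm _)) /ltW.
  by rewrite -/(mean Q (llr Q Qb)) lerBlDr addrC -mulrDr.
by apply: le_iid_pr => // t /andP[].
Qed.

Lemma iid_pr_llr_ge n (E : pred (n.-tuple T)) (c : R) : is_pmf Q ->
  (forall t, E t -> (forall i, 0 < Q (tnth t i)) /\
                    c <= \sum_(i < n) llr Q Qb (tnth t i)) ->
  iid_pr Qb E <= expR (- c).
Proof.
move=> Qpmf Ec; apply: (@le_trans _ _ (iid_pr Q E * expR (- c))).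
  rewrite /iid_pr mulr_suml; apply: ler_sum => t /Ec[Qt_gt0 c_le].
  rewrite (iid_llr Qt_gt0) -mulrA -expRD ler_peMr ?iid_ge0 //.
  by rewrite -expR0 ler_expR subr_ge0.
rewrite ler_piMl ?expR_ge0 // -(sum_iid n Qpmf) [leRHS](bigID E) /= lerDl.
by apply: sumr_ge0 => t _; exact: iid_ge0.
Qed.

End change_of_measure.

Section stein_converse.
Variables (R : realType) (T : finType) (Q Qb : T -> R).
Hypotheses (Qpmf : is_pmf Q) (Qb_gt0 : forall x, 0 < Qb x).

Let Q0 : forall x, 0 <= Q x := Qpmf.1.

Lemma stein_converse (rej : forall n, pred (n.-tuple T)) (e th : R) : e < 1 ->
  (limn_esup (fun n => (iid_pr Q (rej n))%:E) <= e%:E)%E ->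
  (th%:E <= limn_einf (fun n => exponent (iid_pr Qb (fun t => ~~ rej n t)) n))%E ->
  th <= kl Q Qb.
Proof.
move=> e1 /limf_esup_le_nearP alphaA /limf_einf_ge_nearP betaA.
rewrite leNgt; apply/negP => Dth; set D := kl Q Qb in Dth.
pose dd := (th - D) / 4; pose eta := (1 - e) / 3.
have dd0 : 0 < dd by rewrite divr_gt0 // subr_gt0.
have eta0 : 0 < eta by rewrite divr_gt0 // subr_gt0.
near \oo => n.
have n0 : (0 < n)%N by near: n; exact: nbhs_infty_gt.
have n0R : 0 < n%:R :> R by rewrite ltr0n.
have alpha_n : iid_pr Q (rej n) <= e + eta by near: n; exact: alphaA.
have bad_n : iid_pr Q (@atypical _ _ Q (llr Q Qb) (n%:R * dd) n) <= eta.
  by near: n; exact: near_iid_pr_atypical_cst.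
have beta_n : ((th - dd)%:E <= exponent (iid_pr Qb (fun t => ~~ rej n t)) n)%E.
  by near: n; exact: betaA.
have eta_n : - ln eta <= n%:R * dd.
  by rewrite mulrC -ler_pdivrMl //; near: n; exact: nbhs_infty_ger.
set bad := @atypical _ _ _ _ _ n in bad_n.
(* The blocks accepted as H = 1 on which the log-likelihood ratio is typical
   keep Q-probability at least [eta], and each of them has Qb-weight at least
   [exp (- n (D + dd))] times its Q-weight. *)
have good_ge : eta <= iid_pr Q (fun t => ~~ rej n t && ~~ bad t).
  have : iid_pr Q (fun t => ~~ rej n t) <=
         iid_pr Q (fun t => ~~ rej n t && ~~ bad t) + iid_pr Q bad.
    by apply: iid_pr_subadditive => // t; rewrite /=; case: (rej n t); case: (bad t).
  have eta3 : 3 * eta = 1 - e by rewrite mulrC divfK ?pnatr_eq0.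
  by rewrite iid_prC //; lra.
have lb : eta * expR (- (n%:R * (D + dd))) <= iid_pr Qb (fun t => ~~ rej n t) :=
  le_trans (ler_wpM2r (expR_ge0 _) good_ge) (iid_pr_llr_typical_le Q0 Qb_gt0 _ dd).
have lb0 : 0 < eta * expR (- (n%:R * (D + dd))) by rewrite mulr_gt0 ?expR_gt0.
have b0 := lt_le_trans lb0 lb.
move: lb; rewrite -ler_ln ?posrE // lnM ?posrE ?expR_gt0 // expRK => QbA.
rewrite lee_exponent // in beta_n.
have thE : th = D + 4 * dd by rewrite /dd mulrC divfK ?pnatr_eq0 // addrC subrK.
have := mulr_gt0 n0R dd0; rewrite thE in beta_n; lra.
Unshelve. all: by end_near. Qed.

End stein_converse.

Section typical_counting.
Variables (R : realType) (T : finType) (n : nat).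

Lemma card_le_expR (F : 'I_n -> T -> R) (S : {set n.-tuple T}) (c : R) :
  (forall i y, 0 <= F i y) -> (forall i, \sum_y F i y <= 1) ->
  (forall t, t \in S -> (forall i, 0 < F i (tnth t i)) /\
                        \sum_(i < n) - ln (F i (tnth t i)) <= c) ->
  #|S|%:R <= expR c.
Proof.
move=> F0 F1 S_typ.
have prod_ge t : t \in S -> expR (- c) <= \prod_(i < n) F i (tnth t i).
  move=> /S_typ[F_gt0 Fc]; rewrite -(eq_bigr _ (fun i _ => lnK (F_gt0 i))).
  by rewrite -expR_sum ler_expR -lerNl -sumrN.
have : \sum_(t in S) expR (- c) <= 1.
  apply: le_trans (ler_sum _ prod_ge) _.
  apply: le_trans (_ : \sum_t \prod_(i < n) F i (tnth t i) <= 1).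
    rewrite [leRHS](bigID (mem S)) /= lerDl.
    by apply: sumr_ge0 => t _; exact: prodr_ge0.
  by rewrite sum_prod_tnth; apply: prodr_ile1 => i _; rewrite F1 sumr_ge0.
by rewrite sumr_const -[X in X <= 1]mulr_natl expRN ler_pdivrMr ?expR_gt0 // mul1r.
Qed.

End typical_counting.

Lemma ln_succ_le (R : realType) (K : nat) (c : R) : 0 <= c ->
  K%:R <= expR c -> ln K.+1%:R <= ln 2 + c.
Proof.
move=> c0 Kc; have e1 : 1 <= expR c by rewrite -expR0 ler_expR.
rewrite -[c in leRHS]expRK -lnM ?posrE ?expR_gt0 // ler_ln ?posrE ?mulr_gt0 ?expR_gt0 //.
by rewrite -addn1 natrD; lra.
Qed.

Section marginal_fst.
Variables (R : realType) (A B : finType) (n : nat).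

Lemma sum_pair (F : A * B -> R) : \sum_p F p = \sum_a \sum_b F (a, b).
Proof. by rewrite pair_bigA; apply: eq_bigr => -[]. Qed.

Lemma iid_pr_fst (Q : A * B -> R) (E : pred (n.-tuple A)) :
  iid_pr Q (fun t : n.-tuple (A * B) => E (map_tuple fst t)) =
  iid_pr (fun a => \sum_b Q (a, b)) E.
Proof.
pose zipt (p : n.-tuple A * n.-tuple B) := [tuple (tnth p.1 i, tnth p.2 i) | i < n].
have fst_zipt p : map_tuple fst (zipt p) = p.1.
  by apply: eq_from_tnth => i; rewrite tnth_map tnth_mktuple.
rewrite /iid_pr (reindex zipt) /=; last first.
  exists (fun t => (map_tuple fst t, map_tuple snd t)) => [[u v] _|t _].
    by rewrite fst_zipt; congr pair; apply: eq_from_tnth => i; rewrite tnth_map tnth_mktuple.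
  by apply: eq_from_tnth => i; rewrite tnth_mktuple !tnth_map -surjective_pairing.
transitivity (\sum_(u | E u) \sum_(v : n.-tuple B) iid Q (zipt (u, v))).
  by rewrite pair_big_dep; apply: eq_big => [p|[u v] _]; rewrite ?fst_zipt ?andbT.
apply: eq_bigr => u _; rewrite /iid -(sum_prod_tnth (fun i b => Q (tnth u i, b))).
by apply: eq_bigr => v _; apply: eq_bigr => i _; rewrite tnth_mktuple.
Qed.

End marginal_fst.

Lemma is_pmf_inhabited (R : realType) (T : finType) (Q : T -> R) :
  is_pmf Q -> inhabited T.
Proof.
case=> _ Q1; case: (pickP (fun _ : T => true)) => [x _|T0]; first exact: (inhabits x).
by move: Q1; rewrite big_pred0 // => /eqP; rewrite eq_sym oner_eq0.
Qed.

Section system.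
Variables (R : realType) (X Y1 Y2 : finType).
Implicit Types (P Pb : triple X Y1 Y2 -> R).

Lemma marg_XY1E P : marg_XY1 P = fun a => \sum_y2 P (a, y2).
Proof. by apply/funext => -[]. Qed.

Lemma marg_XE P x : marg_X P x = \sum_y marg_XY1 P (x, y).
Proof. by []. Qed.

Lemma marg_XY1_gt0 P (y2 : Y2) : (forall z, 0 < P z) -> forall a, 0 < marg_XY1 P a.
Proof.
move=> P_gt0 a; rewrite marg_XY1E (bigD1 y2) //= ltr_pwDl //.
by apply: sumr_ge0 => y _; exact: ltW.
Qed.

Definition dec1_XY1 n (c : Defs.code X Y1 Y2 n) (u : n.-tuple (X * Y1)) : bool :=
  psi1 (phi1 c (map_tuple fst u)) (map_tuple snd u).

Lemma dec1E n (c : Defs.code X Y1 Y2 n) t : dec1 c t = dec1_XY1 c (map_tuple fst t).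
Proof.
by congr (psi1 (phi1 c _) _); apply: eq_from_tnth => i; rewrite !tnth_map.
Qed.

Lemma prob_iid_fst P n (E : pred (n.-tuple (X * Y1))) :
  prob_iid P (fun t => E (map_tuple fst t)) = iid_pr (marg_XY1 P) E.
Proof. by rewrite marg_XY1E -iid_pr_fst. Qed.

Lemma alpha1E P n (c : Defs.code X Y1 Y2 n) :
  alpha P c false = iid_pr (marg_XY1 P) (dec1_XY1 c).
Proof. by rewrite -prob_iid_fst; apply: eq_bigl => t; rewrite dec1E. Qed.

Lemma beta1E Pb n (c : Defs.code X Y1 Y2 n) :
  beta Pb c false = iid_pr (marg_XY1 Pb) (fun u => ~~ dec1_XY1 c u).
Proof. by rewrite -prob_iid_fst; apply: eq_bigl => t; rewrite dec1E. Qed.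


Lemma beta2E Pb n (c : Defs.code X Y1 Y2 n) :
  beta Pb c true = iid_pr Pb (fun t => ~~ dec2 c t).
Proof. by []. Qed.

Lemma mean_fst P (f : X * Y1 -> R) : mean P (fun z => f z.1) = mean (marg_XY1 P) f.
Proof.
by rewrite /mean sum_pair marg_XY1E; apply: eq_bigr => a _; rewrite mulr_suml.
Qed.

Lemma mean_entropy_X P : mean (marg_XY1 P) (fun a => - ln (marg_X P a.1)) = entropy_X P.
Proof.
rewrite /mean /entropy_X -sumrN sum_pair; apply: eq_bigr => x _.
by rewrite /= -mulr_suml mulrN.
Qed.

Lemma mean_cond_entropy_Y1_X P :
  mean (marg_XY1 P) (fun a => - ln (marg_XY1 P a / marg_X P a.1)) = cond_entropy_Y1_X P.
Proof.
by rewrite /mean /cond_entropy_Y1_X -sumrN; apply: eq_bigr => a _; rewrite mulrN.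
Qed.

Variable P : triple X Y1 Y2 -> R.
Hypothesis Ppmf : is_pmf P.

Let P0 : forall z, 0 <= P z := proj1 Ppmf.

Lemma marg_XY1_ge0 a : 0 <= marg_XY1 P a.
Proof. exact: sumr_ge0. Qed.

Lemma marg_X_ge0 x : 0 <= marg_X P x.
Proof. by apply: sumr_ge0 => y _; exact: marg_XY1_ge0 (x, y). Qed.

Lemma marg_XY1_pmf : is_pmf (marg_XY1 P).
Proof.
split; first exact: marg_XY1_ge0.
by rewrite -(proj2 Ppmf) marg_XY1E [RHS]sum_pair.
Qed.

Lemma marg_X_pmf : is_pmf (marg_X P).
Proof.
split; first exact: marg_X_ge0.
by rewrite -(proj2 marg_XY1_pmf) sum_pair.
Qed.

Lemma le_marg_XY1 z : P z <= marg_XY1 P z.1.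
Proof.
by case: z => -[x y] y2; rewrite /marg_XY1 (bigD1 y2) //= lerDl sumr_ge0.
Qed.

Lemma marg_XY1_le_X a : marg_XY1 P a <= marg_X P a.1.
Proof.
case: a => x y; rewrite marg_XE (bigD1 y) //= lerDl.
by apply: sumr_ge0 => y' _; exact: marg_XY1_ge0.
Qed.

Lemma entropy_X_ge0 : 0 <= entropy_X P.
Proof.
rewrite /entropy_X oppr_ge0; apply: sumr_le0 => x _.
rewrite mulr_ge0_le0 ?marg_X_ge0 // ln_le0 // -(proj2 marg_X_pmf) (bigD1 x) //= lerDl.
by apply: sumr_ge0 => x' _; exact: marg_X_ge0.
Qed.

Lemma cond_entropy_Y1_X_ge0 : 0 <= cond_entropy_Y1_X P.
Proof.
rewrite /cond_entropy_Y1_X oppr_ge0; apply: sumr_le0 => a _.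
rewrite mulr_ge0_le0 ?marg_XY1_ge0 // ln_le0 //.
have [->|PX_neq0] := eqVneq (marg_X P a.1) 0; first by rewrite invr0 mulr0.
have PX_gt0 : 0 < marg_X P a.1 by rewrite lt_def PX_neq0 marg_X_ge0.
by rewrite ler_pdivrMr // mul1r marg_XY1_le_X.
Qed.

Lemma achievable_le_kl Pb (R1 R2 e1 e2 : R) th : (forall z, 0 < Pb z) ->
  e1 < 1 -> e2 < 1 -> achievable P Pb R1 R2 e1 e2 th ->
  th.1 <= kl (marg_XY1 P) (marg_XY1 Pb) /\ th.2 <= kl P Pb.
Proof.
move=> Pb_gt0 e11 e21 [c [alpha1 alpha2 beta1 beta2 _]].
have [[[_ _] y2]] := is_pmf_inhabited Ppmf.
split.
  apply: (stein_converse marg_XY1_pmf (marg_XY1_gt0 y2 Pb_gt0)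
    (rej := fun n => dec1_XY1 (c n)) e11).
    by under eq_fun do rewrite -alpha1E.
  by under eq_fun do rewrite -beta1E.
exact: (stein_converse Ppmf Pb_gt0 (rej := fun n => dec2 (c n)) e21).
Qed.

End system.

Section asymptotics.
Variable R : realType.

Lemma limn_einf_exponent_ge (b : nat -> R) (D th : R) : th <= D ->
  (forall n, 0 <= b n) -> (forall n, b n <= expR (- (n%:R * (D - dev R n)))) ->
  (th%:E <= limn_einf (fun n => exponent (b n) n))%E.
Proof.
move=> thD b0 bD; apply/limf_einf_ge_nearP => e e0; near=> n.
have n0 : (0 < n)%N by near: n; exact: nbhs_infty_gt.
have dev_le : dev R n <= e by near: n; exact: near_dev_le.
apply: le_trans (exponent_ge n0 (b0 n) (bD n)); rewrite lee_fin; lra.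
Unshelve. all: by end_near. Qed.

Lemma limn_esup_rate_le (K : nat -> nat) (H r : R) : 0 <= H -> H <= r ->
  (forall n, (K n)%:R <= expR (n%:R * (H + dev R n))) ->
  (limn_esup (fun n => (ln (K n).+1%:R / n%:R)%:E) <= r%:E)%E.
Proof.
move=> H0 Hr KH; apply/limf_esup_le_nearP => e e0; near=> n.
have n0 : 0 < n%:R :> R by rewrite ltr0n; near: n; exact: nbhs_infty_gt.
have dev_le : dev R n <= e / 2 by near: n; apply: near_dev_le; rewrite divr_gt0.
have ln2_le : ln 2 <= n%:R * (e / 2).
  by rewrite mulrC -ler_pdivrMl ?divr_gt0 //; near: n; exact: nbhs_infty_ger.
have := ln_succ_le (mulr_ge0 (ltW n0) (addr_ge0 H0 (dev_ge0 R n))) (KH n).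
rewrite lee_fin ler_pdivrMr //; nra.
Unshelve. all: by end_near. Qed.

End asymptotics.

Section achievability.
Variables (R : realType) (X Y1 Y2 : finType) (P Pb : triple X Y1 Y2 -> R).
Hypotheses (Ppmf : is_pmf P) (Pb_gt0 : forall z, 0 < Pb z).
Variables (x0 : X) (y0 : Y1).

Local Notation PXY1 := (marg_XY1 P).
Local Notation PbXY1 := (marg_XY1 Pb).
Local Notation PX := (marg_X P).

Let P0 : forall z, 0 <= P z := proj1 Ppmf.

Definition info_X (a : X * Y1) : R := - ln (PX a.1).
Definition info_Y1_X (a : X * Y1) : R := - ln (PXY1 a / PX a.1).

Lemma pair_tnth_map n (u : n.-tuple (X * Y1)) i :
  (tnth (map_tuple fst u) i, tnth (map_tuple snd u) i) = tnth u i.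
Proof. by rewrite !tnth_map -surjective_pairing. Qed.

Lemma triple_tnth_map n (t : n.-tuple (triple X Y1 Y2)) i :
  (tnth (xs t) i, tnth (y1s t) i, tnth (y2s t) i) = tnth t i.
Proof. by rewrite !tnth_map; case: (tnth t i) => -[]. Qed.

Section blocklength.
Variable n : nat.
Local Notation dn := (@dev R n).

Definition typX : {set n.-tuple X} :=
  [set x | [forall i, 0 < PX (tnth x i)] &&
    (\sum_(i < n) - ln (PX (tnth x i)) <= n%:R * (entropy_X P + dn))].

Definition typY1 (x : n.-tuple X) : {set n.-tuple Y1} :=
  [set y | [forall i, 0 < PXY1 (tnth x i, tnth y i)] &&
    (\sum_(i < n) - ln (PXY1 (tnth x i, tnth y i) / PX (tnth x i)) <=
       n%:R * (cond_entropy_Y1_X P + dn))].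

Definition test_XY1 (x : n.-tuple X) (y : n.-tuple Y1) : bool :=
  [forall i, 0 < PXY1 (tnth x i, tnth y i)] &&
  (n%:R * (kl PXY1 PbXY1 - dn) <= \sum_(i < n) llr PXY1 PbXY1 (tnth x i, tnth y i)).

Definition test_XY1Y2 (x : n.-tuple X) (y1 : n.-tuple Y1) (y2 : n.-tuple Y2) : bool :=
  [forall i, 0 < P (tnth x i, tnth y1 i, tnth y2 i)] &&
  (n%:R * (kl P Pb - dn) <= \sum_(i < n) llr P Pb (tnth x i, tnth y1 i, tnth y2 i)).

Definition K1 := #|typX|.
Definition K2 := \max_(x : n.-tuple X) #|typY1 x|.

(* [index] returns [#|S|] outside [S], so out-of-range messages flag an
   atypical block; the detectors then decide for H = 2. *)
Definition enc_X (x : n.-tuple X) : 'I_K1.+1 := inord (index x (enum typX)).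
Definition dec_X (m : 'I_K1.+1) : n.-tuple X := nth (nseq_tuple n x0) (enum typX) m.
Definition enc_Y1 (m : 'I_K1.+1) (y : n.-tuple Y1) : 'I_K2.+1 :=
  inord (index y (enum (typY1 (dec_X m)))).
Definition dec_Y1 (m1 : 'I_K1.+1) (m2 : 'I_K2.+1) : n.-tuple Y1 :=
  nth (nseq_tuple n y0) (enum (typY1 (dec_X m1))) m2.

Definition ach_code : Defs.code X Y1 Y2 n :=
  Code enc_X enc_Y1
    (fun m y => ~~ ((m < K1)%N && test_XY1 (dec_X m) y))
    (fun m1 m2 y2 => ~~ [&& (m1 < K1)%N, (m2 < #|typY1 (dec_X m1)|)%N &
                          test_XY1Y2 (dec_X m1) (dec_Y1 m1 m2) y2]).

Lemma enc_XE x : enc_X x = index x (enum typX) :> nat.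
Proof. by rewrite inordK // ltnS /K1 cardE index_size. Qed.

Lemma enc_X_ltE x : (enc_X x < K1)%N = (x \in typX).
Proof. by rewrite enc_XE /K1 cardE index_mem mem_enum. Qed.

Lemma dec_enc_X x : x \in typX -> dec_X (enc_X x) = x.
Proof. by move=> x_typ; rewrite /dec_X enc_XE nth_index ?mem_enum. Qed.

Lemma enc_Y1E m y : enc_Y1 m y = index y (enum (typY1 (dec_X m))) :> nat.
Proof.
rewrite inordK // ltnS (leq_trans _ (leq_bigmax (dec_X m))) //.
by rewrite cardE index_size.
Qed.

Lemma enc_Y1_ltE m y : (enc_Y1 m y < #|typY1 (dec_X m)|)%N = (y \in typY1 (dec_X m)).
Proof. by rewrite enc_Y1E cardE index_mem mem_enum. Qed.

Lemma dec_enc_Y1 m y : y \in typY1 (dec_X m) -> dec_Y1 m (enc_Y1 m y) = y.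
Proof. by move=> y_typ; rewrite /dec_Y1 enc_Y1E nth_index ?mem_enum. Qed.

Lemma dec1_XY1_ach u : dec1_XY1 ach_code u =
  ~~ ((map_tuple fst u \in typX) && test_XY1 (map_tuple fst u) (map_tuple snd u)).
Proof.
rewrite /dec1_XY1 /= enc_X_ltE.
by have [x_typ|//] := boolP (map_tuple fst u \in typX); rewrite dec_enc_X.
Qed.

Lemma dec2_ach t : dec2 ach_code t =
  ~~ [&& xs t \in typX, y1s t \in typY1 (xs t) & test_XY1Y2 (xs t) (y1s t) (y2s t)].
Proof.
rewrite /dec2 /= enc_X_ltE enc_Y1_ltE.
have [x_typ|//] := boolP (xs t \in typX); rewrite !dec_enc_X //.
have [y_typ|//] := boolP (y1s t \in typY1 (xs t)).
by rewrite -{1}(dec_enc_X x_typ) dec_enc_Y1 ?dec_enc_X.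
Qed.

Lemma ach_dec1_atypical u : dec1_XY1 ach_code u -> ~~ has_null PXY1 u ->
  atypical PXY1 info_X (n%:R * dn) u ||
  atypical PXY1 (llr PXY1 PbXY1) (n%:R * dn) u.
Proof.
move=> rej /(has_nullPn (marg_XY1_ge0 Ppmf)) u_gt0.
move: rej; rewrite dec1_XY1_ach inE negb_and => /orP[x_atyp|].
  apply/orP; left; apply: atypical_sum_gt; rewrite mean_entropy_X.
  move: x_atyp; rewrite negb_and -ltNge => /orP[/forallPn[i]|]; last first.
    by under eq_bigr do rewrite tnth_map.
  by rewrite tnth_map (lt_le_trans (u_gt0 i) (marg_XY1_le_X Ppmf _)).
rewrite /test_XY1 negb_and -ltNge => /orP[/forallPn[i]|]; first by rewrite pair_tnth_map u_gt0.
under eq_bigr do rewrite pair_tnth_map.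
by move=> lt_sum; apply/orP; right; exact: atypical_sum_lt.
Qed.

Lemma ach_dec2_atypical t : dec2 ach_code t -> ~~ has_null P t ->
  [|| atypical P (info_X \o fst) (n%:R * dn) t,
      atypical P (info_Y1_X \o fst) (n%:R * dn) t |
      atypical P (llr P Pb) (n%:R * dn) t].
Proof.
move=> rej /(has_nullPn P0) t_gt0.
have tXY1_gt0 i : 0 < PXY1 (tnth t i).1 := lt_le_trans (t_gt0 i) (le_marg_XY1 Ppmf _).
have tX_gt0 i : 0 < PX (tnth t i).1.1 := lt_le_trans (tXY1_gt0 i) (marg_XY1_le_X Ppmf _).
move: rej; rewrite dec2_ach !inE !negb_and -!ltNge => /or3P[|/orP[|]|/orP[]].
- case/orP=> [/forallPn[i]|lt_sum]; first by rewrite tnth_map tX_gt0.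
  apply/orP; left; apply: atypical_sum_gt; rewrite mean_fst mean_entropy_X.
  by move: lt_sum; under eq_bigr do rewrite tnth_map.
- by case/forallPn=> i; rewrite !tnth_map -surjective_pairing tXY1_gt0.
- move=> lt_sum; apply/or3P; apply: Or32; apply: atypical_sum_gt.
  rewrite mean_fst mean_cond_entropy_Y1_X.
  by move: lt_sum; under eq_bigr do rewrite !tnth_map -surjective_pairing.
- by case/forallPn=> i; rewrite triple_tnth_map t_gt0.
- move=> lt_sum; apply/or3P; apply: Or33; apply: atypical_sum_lt.
  by move: lt_sum; under eq_bigr do rewrite triple_tnth_map.
Qed.

Lemma alpha1_ach_le : alpha P ach_code false <=
  iid_pr PXY1 (@atypical _ _ PXY1 info_X (n%:R * dn) n) +
  iid_pr PXY1 (@atypical _ _ PXY1 (llr PXY1 PbXY1) (n%:R * dn) n).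
Proof.
have PXY1_ge0 := marg_XY1_ge0 Ppmf.
rewrite alpha1E; set A1 := @atypical _ _ _ info_X _ n; set A2 := @atypical _ _ _ _ _ n.
apply: le_trans (iid_pr_subadditive (E1 := has_null PXY1) (E2 := predU A1 A2) PXY1_ge0 _) _.
  move=> u rej; rewrite !inE /=.
  by have [//|u_nnull] := boolP (has_null PXY1 u); rewrite ach_dec1_atypical.
by rewrite iid_pr_has_null add0r iid_pr_subadditive.
Qed.

Lemma alpha2_ach_le : alpha P ach_code true <=
  iid_pr P (@atypical _ _ P (info_X \o fst) (n%:R * dn) n) +
  (iid_pr P (@atypical _ _ P (info_Y1_X \o fst) (n%:R * dn) n) +
   iid_pr P (@atypical _ _ P (llr P Pb) (n%:R * dn) n)).
Proof.
set A1 := @atypical _ _ _ (info_X \o fst) _ n.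
set A2 := @atypical _ _ _ (info_Y1_X \o fst) _ n.
set A3 := @atypical _ _ _ _ _ n.
apply: le_trans (iid_pr_subadditive (E1 := has_null P)
  (E2 := fun t => [|| A1 t, A2 t | A3 t]) P0 _) _.
  move=> t rej; rewrite !inE /=.
  by have [//|t_nnull] := boolP (has_null P t); rewrite ach_dec2_atypical.
rewrite iid_pr_has_null add0r.
apply: le_trans (iid_pr_subadditive (E1 := A1) (E2 := predU A2 A3) P0 _) _ => //.
by rewrite lerD2l iid_pr_subadditive.
Qed.

Lemma beta1_ach_le : beta Pb ach_code false <= expR (- (n%:R * (kl PXY1 PbXY1 - dn))).
Proof.
have [[[_ _] y2]] := is_pmf_inhabited Ppmf.
rewrite beta1E; apply: (iid_pr_llr_ge (marg_XY1_ge0 Ppmf) (marg_XY1_gt0 y2 Pb_gt0)).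
  exact: marg_XY1_pmf.
move=> u; rewrite dec1_XY1_ach negbK => /andP[_ /andP[/forallP u_gt0]].
by under eq_bigr do rewrite pair_tnth_map; split=> // i; rewrite -pair_tnth_map.
Qed.

Lemma beta2_ach_le : beta Pb ach_code true <= expR (- (n%:R * (kl P Pb - dn))).
Proof.
rewrite beta2E; apply: (iid_pr_llr_ge P0 Pb_gt0) => // t.
rewrite dec2_ach negbK => /and3P[_ _ /andP[/forallP t_gt0]].
by under eq_bigr do rewrite triple_tnth_map; split=> // i; rewrite -triple_tnth_map.
Qed.

Lemma card_typX_le : K1%:R <= expR (n%:R * (entropy_X P + dn)).
Proof.
apply: (@card_le_expR _ _ _ (fun _ => PX)) => [i x|i|x].
- exact: marg_X_ge0.
- by rewrite (proj2 (marg_X_pmf Ppmf)).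
- by rewrite inE => /andP[/forallP].
Qed.

Lemma card_typY1_le : K2%:R <= expR (n%:R * (cond_entropy_Y1_X P + dn)).
Proof.
have [x ->] : {x | K2 = #|typY1 x|}.
  by apply: bigop.eq_bigmax; apply/card_gt0P; exists (nseq_tuple n x0).
apply: (@card_le_expR _ _ _ (fun i y => PXY1 (tnth x i, y) / PX (tnth x i))) => [i y|i|y].
- exact: divr_ge0 (marg_XY1_ge0 Ppmf _) (marg_X_ge0 Ppmf _).
- rewrite -mulr_suml -marg_XE.
  have [->|PX_neq0] := eqVneq (PX (tnth x i)) 0; first by rewrite invr0 mulr0 ler01.
  by rewrite divff.
- rewrite inE => /andP[/forallP y_gt0 sum_le]; split=> // i.
  by rewrite divr_gt0 // (lt_le_trans (y_gt0 i) (marg_XY1_le_X Ppmf _)).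
Qed.

End blocklength.
Lemma achievable_of_le_kl (R1 R2 e1 e2 : R) th : 0 < e1 -> 0 < e2 ->
  entropy_X P <= R1 -> cond_entropy_Y1_X P <= R2 ->
  th.1 <= kl PXY1 PbXY1 -> th.2 <= kl P Pb -> achievable P Pb R1 R2 e1 e2 th.
Proof.
move=> e1_gt0 e2_gt0 HR1 HR2 th1 th2; have PXY1_pmf := marg_XY1_pmf Ppmf.
have e2_3 : 0 < e2 / 3 by rewrite divr_gt0.
exists ach_code; split; [| | | |split].
- apply: limf_esup_le_near; near=> n; rewrite lee_fin.
  have a1 : iid_pr PXY1 (@atypical _ _ PXY1 info_X (n%:R * dev R n) n) <= e1 / 2.
    by near: n; apply: near_iid_pr_atypical_dev; rewrite ?divr_gt0.
  have a2 : iid_pr PXY1 (@atypical _ _ PXY1 (llr PXY1 PbXY1) (n%:R * dev R n) n) <= e1 / 2.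
    by near: n; apply: near_iid_pr_atypical_dev; rewrite ?divr_gt0.
  apply: le_trans (alpha1_ach_le n) _; lra.
- apply: limf_esup_le_near; near=> n; rewrite lee_fin.
  have a1 : iid_pr P (@atypical _ _ P (info_X \o fst) (n%:R * dev R n) n) <= e2 / 3.
    by near: n; exact: near_iid_pr_atypical_dev.
  have a2 : iid_pr P (@atypical _ _ P (info_Y1_X \o fst) (n%:R * dev R n) n) <= e2 / 3.
    by near: n; exact: near_iid_pr_atypical_dev.
  have a3 : iid_pr P (@atypical _ _ P (llr P Pb) (n%:R * dev R n) n) <= e2 / 3.
    by near: n; exact: near_iid_pr_atypical_dev.
  apply: le_trans (alpha2_ach_le n) _; lra.
- apply: limn_einf_exponent_ge th1 _ beta1_ach_le => n.
  by apply: iid_pr_ge0 => a; exact: ltW.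
- apply: limn_einf_exponent_ge th2 _ beta2_ach_le => n.
  by apply: iid_pr_ge0 => z; exact: ltW.
- exact: limn_esup_rate_le (entropy_X_ge0 Ppmf) HR1 card_typX_le.
- exact: limn_esup_rate_le (cond_entropy_Y1_X_ge0 Ppmf) HR2 card_typY1_le.
Unshelve. all: by end_near. Qed.

End achievability.

Lemma closed_le_pair (R : realType) (a b : R) :
  closed [set th : R * R | th.1 <= a /\ th.2 <= b].
Proof.
have -> : [set th : R * R | th.1 <= a /\ th.2 <= b] =
          fst @^-1` [set x | x <= a] `&` snd @^-1` [set x | x <= b] by [].
apply: closedI; apply: preimage_closed; try exact: closed_le.
  by move=> x _; exact: cvg_fst.
by move=> x _; exact: cvg_snd.
Qed.

Theorem proposition1 (R : realType) (X Y1 Y2 : finType)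
  (P Pb : triple X Y1 Y2 -> R) (R1 R2 : R) :
  is_pmf P -> is_pmf Pb -> (forall z, 0 < Pb z) ->
  entropy_X P <= R1 -> cond_entropy_Y1_X P <= R2 ->
  forall e1 e2 : R, 0 < e1 < 1 -> 0 < e2 < 1 ->
  [set th : R * R | 0 <= th.1 /\ 0 <= th.2] `&` region P Pb R1 R2 e1 e2 =
  [set th : R * R | [/\ 0 <= th.1, 0 <= th.2,
      th.1 <= kl (marg_XY1 P) (marg_XY1 Pb) & th.2 <= kl P Pb]].
Proof.
move=> Ppmf _ Pb_gt0 HR1 HR2 e1 e2 /andP[e1_gt0 e1_lt1] /andP[e2_gt0 e2_lt1].
have [[[x0 y0] _]] := is_pmf_inhabited Ppmf.
apply/seteqP; split=> [th [[th1_ge0 th2_ge0] th_reg]|th [th1_ge0 th2_ge0 th1 th2]].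
  have [th1 th2] :
      [set th : R * R | th.1 <= kl (marg_XY1 P) (marg_XY1 Pb) /\ th.2 <= kl P Pb] th.
    rewrite ((closure_id _).1 (@closed_le_pair R _ _)).
    by apply: closureS th_reg => th'; exact: achievable_le_kl.
  by split.
split=> //; apply: subset_closure.
exact: achievable_of_le_kl.
Qed.
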